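(* Let $\Sigma$ be a real symmetric positive definite $n\times n$ matrix, let $D_0$ be the diagonal matrix with $[D_0]_{ii}=\dfrac{1}{2[\Sigma^{-1}]_{ii}}$, and let $\lambda_{\min}$ be the smallest eigenvalue of $D_0^{-1/2}\Sigma D_0^{-1/2}$. Let \[\mathcal S(\Sigma)=\{(\hat\Sigma,\tilde\Sigma)\mid \Sigma=\hat\Sigma+\tilde\Sigma,\ \hat\Sigma\ge0,\ \tilde\Sigma\ge 0,\ \tilde\Sigma\text{ diagonal}\},\] $L(K,\hat\Sigma,\tilde\Sigma)=\operatorname{trace}(\hat\Sigma-K\hat\Sigma-\hat\Sigma K'+K(\hat\Sigma+\tilde\Sigma)K')$ for $K\in\mathbb R^{n\times n}$, and for $\lambda\ge 0$ let $(\hat\Sigma_{\lambda,\rm opt},\tilde\Sigma_{\lambda,\rm opt})$ be the (unique) maximizer over $\mathcal S(\Sigma)$ of \[\min_K\big(L(K,\hat\Sigma,\tilde\Sigma)-\lambda\operatorname{trace}(\hat\Sigma)\big)=\operatorname{trace}\big((1-\lambda)\hat\Sigma-\hat\Sigma\Sigma^{-1}\hat\Sigma\big).\] Then for every $\lambda\ge 0$ with $\lambda\ge\lambda_{\min}-1$, the matrix $\hat\Sigma_{\lambda,\rm opt}$ is singular.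
   Context: All matrices $\hat\Sigma,\tilde\Sigma$ are real symmetric $n\times n$; $M\ge0$ means positive semidefinite. This maximizer corresponds to the regularized min-max problem $\min_K\max_{\mathcal S(\Sigma)}(L-\lambda\operatorname{trace}(\hat\Sigma))$, for which min and max can be exchanged. *)

From HB Require Import structures.
From mathcomp Require Import all_boot all_order all_algebra.
Set Implicit Arguments. Unset Strict Implicit. Unset Printing Implicit Defensive.
Import Order.TTheory GRing.Theory Num.Theory.
Local Open Scope ring_scope.

Section Defs.
Variable R : rcfType.
Variable n : nat.

Definition psd (A : 'M[R]_n) : Prop :=
  A^T = A /\ forall v : 'cV[R]_n, 0 <= (v^T *m A *m v) 0 0.

Definition pd (A : 'M[R]_n) : Prop :=
  A^T = A /\ forall v : 'cV[R]_n, v != 0 -> 0 < (v^T *m A *m v) 0 0.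

Definition D0 (S : 'M[R]_n) : 'M[R]_n :=
  diag_mx (\row_i (2 * invmx S i i)^-1).

Definition D0_invsqrt (S : 'M[R]_n) : 'M[R]_n :=
  diag_mx (\row_i (Num.sqrt (D0 S i i))^-1).

Definition is_min_eigenvalue (A : 'M[R]_n) (l : R) : Prop :=
  eigenvalue A l /\ forall m, eigenvalue A m -> l <= m.

Definition in_S (S Sh St : 'M[R]_n) : Prop :=
  S = Sh + St /\ psd Sh /\ psd St /\ is_diag_mx St.

(* min_K (L(K,Sh,St) - lam tr Sh) = tr((1-lam) Sh - Sh S^-1 Sh) *)
Definition objective (S : 'M[R]_n) (lam : R) (Sh : 'M[R]_n) : R :=
  \tr ((1 - lam) *: Sh - Sh *m invmx S *m Sh).

Definition is_maximizer (S : 'M[R]_n) (lam : R) (Sh St : 'M[R]_n) : Prop :=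
  in_S S Sh St /\
  forall Sh' St', in_S S Sh' St' -> objective S lam Sh' <= objective S lam Sh.

End Defs.

From HB Require Import structures.
From mathcomp Require Import all_boot all_order all_algebra.
From mathcomp Require Import ring lra.
Import Order.TTheory GRing.Theory Num.Theory.
Local Open Scope ring_scope.
Set Implicit Arguments. Unset Strict Implicit.

(* If [Sh] were invertible, it would stay positive semidefinite after removing a small
   multiple of a diagonal unit [E_ii], and that multiple may be moved to the diagonal [St].
   Optimality along this move gives [1 + lam <= 2 [St]_ii [Sigma^-1]_ii], that is
   [D0^-1/2 St D0^-1/2 >= (1 + lam) I].  For an eigenvector [w] of
   [D0^-1/2 Sigma D0^-1/2] with eigenvalue [lmin <= 1 + lam], the vector [x = D0^-1/2 w]
   then has [x' Sh x = x' Sigma x - x' St x <= 0], forcing [x = 0]. *)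

Lemma sqr_le_mul_of_quadratic_ge0 (R : realFieldType) (a b c : R) :
  0 <= c -> (forall s, 0 <= a + 2 * s * b + s ^+ 2 * c) -> b ^+ 2 <= a * c.
Proof.
move=> c_ge0 quad_ge0; have [c0|c_neq0] := eqVneq c 0.
  suff -> : b = 0 by rewrite c0 expr0n mulr0.
  apply/eqP/negPn/negP => b_neq0.
  have := quad_ge0 (- (a + 1) / (2 * b)); rewrite c0 mulr0 addr0.
  have -> : 2 * (- (a + 1) / (2 * b)) * b = - (a + 1) by field; rewrite b_neq0.
  lra.
have c_gt0 : 0 < c by rewrite lt0r c_neq0.
have := quad_ge0 (- b / c).
have -> : a + 2 * (- b / c) * b + (- b / c) ^+ 2 * c = (a * c - b ^+ 2) / c by field.
by rewrite pmulr_lge0 ?invr_gt0 // subr_ge0.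
Qed.

Lemma le0_of_quadratic_le0_near0 (R : realFieldType) (a p t0 : R) : 0 < t0 ->
  (forall t, 0 < t <= t0 -> t * a - t ^+ 2 * p <= 0) -> a <= 0.
Proof.
move=> t0_gt0 near0; rewrite leNgt; apply/negP => a_gt0.
pose k := 2 * (`|p| + 1).
have k_gt0 : 0 < k by rewrite mulr_gt0 ?ltr_wpDl.
pose t := Num.min t0 (a / k).
have t_gt0 : 0 < t by rewrite lt_min t0_gt0 divr_gt0.
have := near0 t; rewrite t_gt0 ge_min lexx => /(_ isT) le0.
have tk_le : t * k <= a by rewrite -ler_pdivlMr // ge_min lexx orbT.
have p_le : p <= `|p| := ler_norm p.
rewrite /k in tk_le; nra.
Qed.

Section BilinearForm.
Variables (R : rcfType) (n : nat).
Implicit Types (A B : 'M[R]_n) (x y : 'cV[R]_n).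

Definition form A x y : R := (x^T *m A *m y) 0 0.

Lemma formC A x y : A^T = A -> form A y x = form A x y.
Proof.
move=> A_sym; have trE (B : 'M[R]_1) : B 0 0 = B^T 0 0 by rewrite mxE.
by rewrite /form [RHS]trE !trmx_mul trmxK A_sym mulmxA.
Qed.

Lemma form_sqrDZ A x y s : A^T = A ->
  form A (x + s *: y) (x + s *: y) = form A x x + 2 * s * form A x y + s ^+ 2 * form A y y.
Proof.
move=> A_sym; have := formC x y A_sym; rewrite /form.
have -> : (x + s *: y)^T = x^T + s *: y^T by rewrite linearD linearZ.
rewrite !mulmxDl !mulmxDr -!scalemxAl -!scalemxAr !mxE => ->; ring.
Qed.

Lemma formDl A B x y : form (A + B) x y = form A x y + form B x y.
Proof. by rewrite /form mulmxDr mulmxDl mxE. Qed.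

Lemma formZl t A x y : form (t *: A) x y = t * form A x y.
Proof. by rewrite /form -scalemxAr -scalemxAl mxE. Qed.

Lemma form_mulmx Q A x y : form A (Q *m x) (Q *m y) = form (Q^T *m A *m Q) x y.
Proof. by rewrite /form trmx_mul !mulmxA. Qed.

Lemma form_eigenrow A (w : 'rV[R]_n) l : w *m A = l *: w ->
  form A w^T w^T = l * \sum_j w 0 j ^+ 2.
Proof.
move=> w_eigen; rewrite /form trmxK w_eigen -scalemxAl !mxE; congr (_ * _).
by apply: eq_bigr => j _; rewrite mxE expr2.
Qed.

Lemma form_invmx_delta A x i : A \in unitmx ->
  form A x (invmx A *m delta_mx i 0) = x i 0.
Proof. by move=> A_unit; rewrite /form -mulmxA (mulmxA A) mulmxV // mul1mx -colE !mxE. Qed.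

Lemma form_diag A x : is_diag_mx A -> form A x x = \sum_j A j j * x j 0 ^+ 2.
Proof.
move/is_diag_mxP => A_diag; rewrite /form mxE; apply: eq_bigr => j _.
rewrite mxE (bigD1 j) //= big1 ?addr0 ?mxE => [|k kj]; first by rewrite expr2 mulrCA mulrA.
by rewrite A_diag ?mulr0.
Qed.

Lemma form_delta x i : form (delta_mx i i) x x = x i 0 ^+ 2.
Proof.
rewrite /form -(mul_delta_mx (0 : 'I_1)) mulmxA -colE -mulmxA -rowE.
by rewrite !mxE big_ord1 !mxE expr2.
Qed.

Lemma psd_form_CauchySchwarz A x y : psd A -> form A x y ^+ 2 <= form A x x * form A y y.
Proof.
case=> A_sym A_ge0; apply: sqr_le_mul_of_quadratic_ge0 => [|s]; first exact: A_ge0.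
by rewrite -form_sqrDZ //; apply: A_ge0.
Qed.

Lemma psd_unit_form_eq0 A x : psd A -> A \in unitmx -> form A x x = 0 -> x = 0.
Proof.
move=> A_psd A_unit x0; apply/matrixP => i j; rewrite (ord1 j) mxE.
have := psd_form_CauchySchwarz x (invmx A *m delta_mx i 0) A_psd.
rewrite form_invmx_delta // x0 mul0r => le0.
by apply/eqP; rewrite -sqrf_eq0 eq_le le0 sqr_ge0.
Qed.

End BilinearForm.

Section DiagonalPerturbation.
Variables (R : rcfType) (n : nat).
Implicit Types (A D M : 'M[R]_n).

Lemma is_diag_mxD A D : is_diag_mx A -> is_diag_mx D -> is_diag_mx (A + D).
Proof.
move=> /is_diag_mxP A_diag /is_diag_mxP D_diag; apply/is_diag_mxP => i j ij.
by rewrite mxE A_diag ?D_diag ?addr0.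
Qed.

Lemma is_diag_mxZ t A : is_diag_mx A -> is_diag_mx (t *: A).
Proof. by move=> /is_diag_mxP A_diag; apply/is_diag_mxP => i j ij; rewrite mxE A_diag ?mulr0. Qed.

Lemma delta_mx_is_diag i : is_diag_mx (delta_mx i i : 'M[R]_n).
Proof.
apply/is_diag_mxP => j k jk; rewrite mxE.
by case: eqP => [ji|] //; case: eqP => [ki|] //; rewrite ji ki eqxx in jk.
Qed.

Lemma psd_addZ_delta A i t : psd A -> 0 <= t -> psd (A + t *: delta_mx i i).
Proof.
move=> [A_sym A_ge0] t_ge0; split; first by rewrite linearD linearZ /= trmx_delta A_sym.
move=> x; rewrite -[X in 0 <= X]/(form _ x x) formDl formZl form_delta.
by apply: addr_ge0; [exact: A_ge0 | exact: mulr_ge0 t_ge0 (sqr_ge0 _)].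
Qed.

(* With [y = A^-1 e_i] and [c = form A y y], Cauchy-Schwarz gives [x_i^2 <= c * form A x x];
   hence any [t <= 1/(c+1)] works. *)
Lemma psd_subZ_delta A i : psd A -> A \in unitmx ->
  exists2 t0, 0 < t0 & forall t, 0 < t <= t0 -> psd (A - t *: delta_mx i i).
Proof.
move=> A_psd A_unit; have [A_sym A_ge0] := A_psd.
pose c := form A (invmx A *m delta_mx i 0) (invmx A *m delta_mx i 0).
have c_ge0 : 0 <= c by apply: A_ge0.
exists (c + 1)^-1 => [|t /andP [t_gt0 t_le]]; first by rewrite invr_gt0; lra.
split; first by rewrite linearB linearZ /= trmx_delta A_sym.
move=> x; rewrite -[X in 0 <= X]/(form _ x x) -scaleNr formDl formZl form_delta.
have := psd_form_CauchySchwarz x (invmx A *m delta_mx i 0) A_psd.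
rewrite form_invmx_delta // -/c.
have q_ge0 : 0 <= form A x x by apply: A_ge0.
have tc_le1 : t * (c + 1) <= 1 by rewrite -ler_pdivlMr ?div1r //; lra.
nra.
Qed.

Lemma mxtrace_delta_mull M i : \tr (delta_mx i i *m M) = M i i.
Proof.
rewrite -(mul_delta_mx (0 : 'I_1)) -mulmxA mxtrace_mulC -rowE -colE.
by rewrite /mxtrace big_ord1 !mxE.
Qed.

Lemma mxtrace_delta_mulr M i : \tr (M *m delta_mx i i) = M i i.
Proof. by rewrite mxtrace_mulC mxtrace_delta_mull. Qed.

Lemma mulmx_delta_diag M i : (M *m delta_mx i i) i i = M i i.
Proof.
rewrite mxE (bigD1 i) //= big1 ?addr0 ?mxE ?eqxx ?mulr1 // => k ki.
by rewrite mxE (negPf ki) mulr0.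
Qed.

Lemma objective_subZ_delta (S Sh : 'M[R]_n) (lam t : R) i :
  objective S lam (Sh - t *: delta_mx i i) = objective S lam Sh
    + t * ((Sh *m invmx S) i i + (invmx S *m Sh) i i - (1 - lam)) - t ^+ 2 * invmx S i i.
Proof.
have tr_delta : \tr (delta_mx i i : 'M[R]_n) = 1.
  by rewrite -[delta_mx i i]mul1mx mxtrace_delta_mulr mxE eqxx.
rewrite /objective !mulmxBl !mulmxBr -!scalemxAl -!scalemxAr !scalerBr.
rewrite !(linearB, linearZ) /= -!mulmxA !mxtrace_delta_mull tr_delta.
rewrite [Sh *m (_ *m delta_mx i i)]mulmxA mxtrace_delta_mulr mulmx_delta_diag.
ring.
Qed.

End DiagonalPerturbation.

Section PositiveDefinite.
Variables (R : rcfType) (n : nat) (S : 'M[R]_n).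
Hypothesis S_pd : pd S.

Lemma pd_unitmx : S \in unitmx.
Proof.
have [_ S_gt0] := S_pd; rewrite unitmxE unitfE; apply/negP => /det0P [v v_neq0 vS0].
by have := S_gt0 v^T; rewrite trmx_eq0 trmxK vS0 mul0mx mxE ltxx => /(_ v_neq0).
Qed.

Lemma pd_invmx_diag_gt0 i : 0 < invmx S i i.
Proof.
have [_ S_gt0] := S_pd; have S_unit := pd_unitmx.
have y_neq0 : invmx S *m (delta_mx i 0 : 'cV_n) != 0.
  apply/negP => /eqP y0.
  have := congr1 (mulmx S) y0; rewrite mulmxA mulmxV // mul1mx mulmx0.
  by move/matrixP/(_ i 0); rewrite !mxE !eqxx /= => /eqP; rewrite oner_eq0.
have := S_gt0 _ y_neq0; rewrite -[X in 0 < X]/(form _ _ _) form_invmx_delta //.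
by rewrite -colE mxE.
Qed.

Lemma D0_invsqrt_sqr i : D0_invsqrt S i i ^+ 2 = 2 * invmx S i i.
Proof.
have Pii_gt0 := pd_invmx_diag_gt0 i.
rewrite /D0_invsqrt /D0 !mxE !eqxx !mulr1n exprVn sqr_sqrtr ?invrK //.
by rewrite invr_ge0 mulr_ge0 // ltW.
Qed.

Lemma D0_invsqrt_unitmx : D0_invsqrt S \in unitmx.
Proof.
rewrite unitmxE unitfE det_diag; apply/prodf_neq0 => i _.
rewrite mxE invr_eq0 sqrtr_eq0 -ltNge /D0 !mxE eqxx mulr1n invr_gt0.
by rewrite mulr_gt0 // pd_invmx_diag_gt0.
Qed.

Lemma form_diag_D0_invsqrt D x : is_diag_mx D ->
  form D (D0_invsqrt S *m x) (D0_invsqrt S *m x)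
  = \sum_j 2 * D j j * invmx S j j * x j 0 ^+ 2.
Proof.
move=> D_diag; rewrite form_diag //; apply: eq_bigr => j _.
have -> : (D0_invsqrt S *m x) j 0 = D0_invsqrt S j j * x j 0.
  by rewrite /D0_invsqrt mul_diag_mx !mxE eqxx mulr1n.
by rewrite exprMn D0_invsqrt_sqr mulrA; congr (_ * _); rewrite mulrCA mulrA.
Qed.

End PositiveDefinite.

Lemma maximizer_first_order (R : rcfType) n (S Sh St : 'M[R]_n) lam i :
  pd S -> is_maximizer S lam Sh St -> Sh \in unitmx ->
  1 + lam <= 2 * St i i * invmx S i i.
Proof.
move=> S_pd [[S_dec [Sh_psd [St_psd St_diag]]] Sh_max] Sh_unit.
have [t0 t0_gt0 Sh_sub_psd] := psd_subZ_delta i Sh_psd Sh_unit.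
have S_unit := pd_unitmx S_pd; set P := invmx S.
have /diag_mxP [d St_def] := St_diag.
have St_ii : St i i = d 0 i by rewrite St_def mxE eqxx mulr1n.
have Sh_def : Sh = S - St by rewrite S_dec addrK.
have ShP_ii : (Sh *m P) i i = 1 - St i i * P i i.
  by rewrite St_ii Sh_def mulmxBl mulmxV // St_def mul_diag_mx !mxE eqxx.
have PSh_ii : (P *m Sh) i i = 1 - St i i * P i i.
  by rewrite St_ii Sh_def mulmxBr mulVmx // St_def mul_mx_diag !mxE eqxx mulrC.
suff : 1 + lam - 2 * St i i * P i i <= 0 by rewrite subr_le0.
apply: (le0_of_quadratic_le0_near0 (p := P i i) t0_gt0) => t /andP [t_gt0 t_le].
have feasible : in_S S (Sh - t *: delta_mx i i) (St + t *: delta_mx i i).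
  split; first by rewrite S_dec addrACA addNr addr0.
  split; first by apply: Sh_sub_psd; rewrite t_gt0.
  split; first by apply: psd_addZ_delta => //; apply: ltW.
  by rewrite is_diag_mxD ?is_diag_mxZ ?delta_mx_is_diag.
have := Sh_max _ _ feasible; rewrite objective_subZ_delta ShP_ii PSh_ii.
lra.
Qed.

Unset Implicit Arguments. Set Strict Implicit.

Theorem mainTheorem18 (R : rcfType) (n : nat) (S : 'M[R]_n) (lmin lam : R)
    (Sh St : 'M[R]_n) :
  pd S ->
  is_min_eigenvalue (D0_invsqrt S *m S *m D0_invsqrt S) lmin ->
  0 <= lam -> lmin - 1 <= lam ->
  is_maximizer S lam Sh St ->
  Sh \notin unitmx.
Proof.
move=> S_pd [/eigenvalueP [w w_eigen w_neq0] _] _ lmin_le Sh_max.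
have [[S_dec [Sh_psd [_ St_diag]]] _] := Sh_max.
apply/negP => Sh_unit.
pose Q := D0_invsqrt S; pose x := Q *m w^T; pose W := \sum_j w 0 j ^+ 2.
have W_ge0 : 0 <= W by rewrite sumr_ge0 // => j _; rewrite sqr_ge0.
have form_S : form S x x = lmin * W.
  by rewrite form_mulmx tr_diag_mx (form_eigenrow w_eigen).
have form_St : (1 + lam) * W <= form St x x.
  rewrite form_diag_D0_invsqrt // mulr_sumr; apply: ler_sum => j _.
  by rewrite mxE ler_wpM2r ?sqr_ge0 ?(maximizer_first_order _ S_pd Sh_max).
have x0 : x = 0.
  apply: (psd_unit_form_eq0 Sh_psd Sh_unit); apply/eqP.
  have := formDl Sh St x x; rewrite -S_dec form_S.
  have := Sh_psd.2 x; rewrite -[X in 0 <= X]/(form _ x x) eq_le => ->; nra.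
move: w_neq0; rewrite -[w]trmxK -(mulKmx (D0_invsqrt_unitmx S_pd) w^T) -/Q -/x x0.
by rewrite mulmx0 linear0 eqxx.
Qed.
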